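(* Let $(\mathscr{C},\mathbb{E},\mathfrak{s})$ be an extriangulated category such that for every object $A$ the morphism $A\to 0$ is an $\mathbb{E}$-inflation and $0\to A$ is an $\mathbb{E}$-deflation, and let $\Sigma$ be as in the context. Then the functor $\mathbf{E}^1\colon\mathscr{C}^{\mathrm{op}}\times\mathscr{C}\to Ab$, $\mathbf{E}^1(-,-)=\mathscr{C}(-,\Sigma -)$, is biadditive.
   Context: An extriangulated category $(\mathscr{C},\mathbb{E},\mathfrak{s})$ is in the sense of Nakaoka–Palu: $\mathscr{C}$ additive, $\mathbb{E}\colon\mathscr{C}^{\mathrm{op}}\times\mathscr{C}\to Ab$ biadditive, $\mathfrak{s}$ an additive realisation assigning to $\delta\in\mathbb{E}(C,A)$ an equivalence class of sequences $[A\to B\to C]$, satisfying (ET1)–(ET4)$^{\mathrm{op}}$. For $a\colon A\to A'$ and $c\colon C'\to C$ write $a_*\delta=\mathbb{E}(C,a)(\delta)$ and $c^*\delta=\mathbb{E}(c,A)(\delta)$. A morphism $x\colon A\to B$ is an $\mathbb{E}$-inflation if $\mathfrak{s}(\delta)=[A\xrightarrow{x}B\to C]$ for some $\delta\in\mathbb{E}(C,A)$; dually for $\mathbb{E}$-deflations. For each object $Y$, $\Sigma Y$ is a chosen object with $\delta_Y\in\mathbb{E}(\Sigma Y,Y)$ such that $\mathfrak{s}(\delta_Y)=[Y\to 0\to\Sigma Y]$; for $f\colon X\to Y$, $\Sigma f$ is the unique morphism $\Sigma X\to\Sigma Y$ with $f_*\delta_X=(\Sigma f)^*\delta_Y$;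 $\Sigma$ is a functor. *)

From HB Require Import structures.
From mathcomp Require Import all_boot all_algebra.
Set Implicit Arguments. Unset Strict Implicit. Unset Printing Implicit Defensive.
Import GRing.Theory.
Local Open Scope ring_scope.

Record catData := CatData {
  Obj : Type;
  Mor : Obj -> Obj -> zmodType;
  comp : forall A B C : Obj, Mor B C -> Mor A B -> Mor A C;
  idm : forall A : Obj, Mor A A;
  zobj : Obj
}.
Arguments Mor {c}.
Arguments comp {c A B C}.
Arguments idm {c}.
Arguments zobj {c}.
Notation "g \oc f" := (comp g f) (at level 40, left associativity).

Section Cat.
Variable C : catData.

Definition is_biprod (A B P : Obj C) (i1 : Mor A P) (i2 : Mor B P)
  (p1 : Mor P A) (p2 : Mor P B) : Prop :=
  [/\ p1 \oc i1 = idm A, p2 \oc i2 = idm B, p1 \oc i2 = 0, p2 \oc i1 = 0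
    & i1 \oc p1 + i2 \oc p2 = idm P].

Definition is_iso (A B : Obj C) (f : Mor A B) : Prop :=
  exists g : Mor B A, g \oc f = idm A /\ f \oc g = idm B.

Record isAdditive : Prop := {
  comp_assoc : forall (A B D E : Obj C) (h : Mor D E) (g : Mor B D) (f : Mor A B),
      h \oc (g \oc f) = (h \oc g) \oc f;
  comp_idl : forall (A B : Obj C) (f : Mor A B), idm B \oc f = f;
  comp_idr : forall (A B : Obj C) (f : Mor A B), f \oc idm A = f;
  comp_addl : forall (A B D : Obj C) (g1 g2 : Mor B D) (f : Mor A B),
      (g1 + g2) \oc f = g1 \oc f + g2 \oc f;
  comp_addr : forall (A B D : Obj C) (g : Mor B D) (f1 f2 : Mor A B),
      g \oc (f1 + f2) = g \oc f1 + g \oc f2;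
  zobj_init : forall (A : Obj C) (f : Mor zobj A), f = 0;
  zobj_term : forall (A : Obj C) (f : Mor A zobj), f = 0;
  biprod_ex : forall A B : Obj C, exists (P : Obj C) (i1 : Mor A P) (i2 : Mor B P)
      (p1 : Mor P A) (p2 : Mor P B), is_biprod i1 i2 p1 p2
}.
End Cat.

(* ---------- Extension data: E(C,A) = Ext C A, a_* = push a, c^* = pull c,
   and the realization s, as the relation "s(delta) = [A -x-> B -y-> C]" ---- *)
Record extData (C : catData) := ExtData {
  Ext : Obj C -> Obj C -> zmodType;
  push : forall (Z A A' : Obj C), Mor A A' -> Ext Z A -> Ext Z A';
  pull : forall (Z Z' A : Obj C), Mor Z' Z -> Ext Z A -> Ext Z' A;
  realizes : forall (Z A B : Obj C), Ext Z A -> Mor A B -> Mor B Z -> Prop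
}.
Arguments Ext {C} e : rename.
Arguments push {C} e {Z A A'} : rename.
Arguments pull {C} e {Z Z' A} : rename.
Arguments realizes {C} e {Z A B} : rename.

Section Extri.
Variables (C : catData) (X : extData C).
Local Notation E := (Ext X).
Local Notation push := (push X).
Local Notation pull := (pull X).
Local Notation realizes := (realizes X).

Definition seq_equiv (Z A B B' : Obj C) (x : Mor A B) (y : Mor B Z)
  (x' : Mor A B') (y' : Mor B' Z) : Prop :=
  exists b : Mor B B', [/\ is_iso b, b \oc x = x' & y' \oc b = y].

Record isExtriangulated : Prop := {
  push_add : forall Z A A' (a : Mor A A') (d1 d2 : E Z A),
      push a (d1 + d2) = push a d1 + push a d2;
  pull_add : forall Z Z' A (c : Mor Z' Z) (d1 d2 : E Z A),
      pull c (d1 + d2) = pull c d1 + pull c d2;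
  push_id : forall Z A (d : E Z A), push (idm A) d = d;
  pull_id : forall Z A (d : E Z A), pull (idm Z) d = d;
  push_comp : forall Z A A' A'' (a : Mor A A') (a' : Mor A' A'') (d : E Z A),
      push (a' \oc a) d = push a' (push a d);
  pull_comp : forall Z Z' Z'' A (c : Mor Z' Z) (c' : Mor Z'' Z') (d : E Z A),
      pull (c \oc c') d = pull c' (pull c d);
  push_pull : forall Z Z' A A' (a : Mor A A') (c : Mor Z' Z) (d : E Z A),
      push a (pull c d) = pull c (push a d);
  push_addm : forall Z A A' (a1 a2 : Mor A A') (d : E Z A),
      push (a1 + a2) d = push a1 d + push a2 d;
  pull_addm : forall Z Z' A (c1 c2 : Mor Z' Z) (d : E Z A),
      pull (c1 + c2) d = pull c1 d + pull c2 d;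
  (* s assigns to each extension an equivalence class of sequences *)
  real_ex : forall Z A (d : E Z A), exists (B : Obj C) (x : Mor A B) (y : Mor B Z),
      realizes d x y;
  real_class : forall Z A B B' (d : E Z A) (x : Mor A B) (y : Mor B Z)
      (x' : Mor A B') (y' : Mor B' Z),
      realizes d x y -> (realizes d x' y' <-> seq_equiv x y x' y');
  real_morph : forall Z Z' A A' B B' (d : E Z A) (d' : E Z' A')
      (x : Mor A B) (y : Mor B Z) (x' : Mor A' B') (y' : Mor B' Z')
      (a : Mor A A') (c : Mor Z Z'),
      realizes d x y -> realizes d' x' y' -> push a d = pull c d' ->
      exists b : Mor B B', b \oc x = x' \oc a /\ y' \oc b = c \oc y;
  real_zero : forall Z A P (i1 : Mor A P) (i2 : Mor Z P) (p1 : Mor P A) (p2 : Mor P Z),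
      is_biprod i1 i2 p1 p2 -> realizes (0 : E Z A) i1 p2;
  real_sum : forall A A' B B' Z Z' PA PB PZ
      (iA : Mor A PA) (iA' : Mor A' PA) (pA : Mor PA A) (pA' : Mor PA A')
      (iB : Mor B PB) (iB' : Mor B' PB) (pB : Mor PB B) (pB' : Mor PB B')
      (iZ : Mor Z PZ) (iZ' : Mor Z' PZ) (pZ : Mor PZ Z) (pZ' : Mor PZ Z')
      (d : E Z A) (d' : E Z' A') (x : Mor A B) (y : Mor B Z)
      (x' : Mor A' B') (y' : Mor B' Z'),
      is_biprod iA iA' pA pA' -> is_biprod iB iB' pB pB' -> is_biprod iZ iZ' pZ pZ' ->
      realizes d x y -> realizes d' x' y' ->
      realizes (push iA (pull pZ d) + push iA' (pull pZ' d'))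
               (iB \oc x \oc pA + iB' \oc x' \oc pA')
               (iZ \oc y \oc pB + iZ' \oc y' \oc pB');
  ET3 : forall Z Z' A A' B B' (d : E Z A) (d' : E Z' A')
      (x : Mor A B) (y : Mor B Z) (x' : Mor A' B') (y' : Mor B' Z')
      (a : Mor A A') (b : Mor B B'),
      realizes d x y -> realizes d' x' y' -> b \oc x = x' \oc a ->
      exists c : Mor Z Z', c \oc y = y' \oc b /\ push a d = pull c d';
  ET3op : forall Z Z' A A' B B' (d : E Z A) (d' : E Z' A')
      (x : Mor A B) (y : Mor B Z) (x' : Mor A' B') (y' : Mor B' Z')
      (b : Mor B B') (c : Mor Z Z'),
      realizes d x y -> realizes d' x' y' -> y' \oc b = c \oc y ->
      exists a : Mor A A', x' \oc a = b \oc x /\ push a d = pull c d';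
  ET4 : forall A B D Cc F (d : E D A) (d' : E F B)
      (f : Mor A B) (f' : Mor B D) (g : Mor B Cc) (g' : Mor Cc F),
      realizes d f f' -> realizes d' g g' ->
      exists (Eo : Obj C) (d'' : E Eo A) (e1 : Mor D Eo) (e2 : Mor Eo F) (h' : Mor Cc Eo),
        [/\ realizes d'' (g \oc f) h', realizes (push f' d') e1 e2,
            e1 \oc f' = h' \oc g, e2 \oc h' = g'
          & pull e1 d'' = d /\ push f d'' = pull e2 d'];
  ET4op : forall A B D Cc F (d : E A D) (d' : E B F)
      (f' : Mor D B) (f : Mor B A) (g' : Mor F Cc) (g : Mor Cc B),
      realizes d f' f -> realizes d' g' g ->
      exists (Eo : Obj C) (d'' : E A Eo) (e1 : Mor Eo D) (e2 : Mor F Eo) (h' : Mor Eo Cc),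
        [/\ realizes d'' h' (f \oc g), realizes (pull f' d') e2 e1,
            f' \oc e1 = g \oc h', h' \oc e2 = g'
          & push e1 d'' = d /\ pull f d'' = push e2 d']
}.

Definition is_inflation (A B : Obj C) (x : Mor A B) : Prop :=
  exists (Z : Obj C) (y : Mor B Z) (d : E Z A), realizes d x y.
Definition is_deflation (B Z : Obj C) (y : Mor B Z) : Prop :=
  exists (A : Obj C) (x : Mor A B) (d : E Z A), realizes d x y.
End Extri.

Definition E1map (C : catData) (Sig : Obj C -> Obj C)
  (SigF : forall U V : Obj C, Mor U V -> Mor (Sig U) (Sig V))
  (Z Z' A A' : Obj C) (c : Mor Z' Z) (a : Mor A A') (phi : Mor Z (Sig A))
  : Mor Z' (Sig A') := SigF A A' a \oc (phi \oc c).

Definition E1_biadditive (C : catData) (Sig : Obj C -> Obj C)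
  (SigF : forall U V : Obj C, Mor U V -> Mor (Sig U) (Sig V)) : Prop :=
  [/\ (forall (Z Z' A A' : Obj C) (c : Mor Z' Z) (a : Mor A A') (p1 p2 : Mor Z (Sig A)),
         E1map SigF c a (p1 + p2) = E1map SigF c a p1 + E1map SigF c a p2),
      (forall (Z Z' A A' : Obj C) (c : Mor Z' Z) (a1 a2 : Mor A A') (p : Mor Z (Sig A)),
         E1map SigF c (a1 + a2) p = E1map SigF c a1 p + E1map SigF c a2 p)
    & (forall (Z Z' A A' : Obj C) (c1 c2 : Mor Z' Z) (a : Mor A A') (p : Mor Z (Sig A)),
         E1map SigF (c1 + c2) a p = E1map SigF c1 a p + E1map SigF c2 a p)].

(** A morphism [h : W -> Sig V] is determined by [h^* delta_V]: if this
    vanishes, the split sequence [V -> V (+) W -> W], which realizes [0], maps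
    to the realization [V -> 0 -> Sig V] of [delta_V] over [(1, h)], and the
    resulting square forces [h] to factor through [0].  Since
    [(a1 + a2)_* delta = a1_* delta + a2_* delta], the defining property
    [f_* delta_U = (Sig f)^* delta_V] then makes [Sig] additive, and the
    biadditivity of [C(-, Sig -)] reduces to the bilinearity of composition. *)
From mathcomp Require Import all_boot all_algebra.
Set Implicit Arguments. Unset Strict Implicit. Unset Printing Implicit Defensive.
Import GRing.Theory.
Local Open Scope ring_scope.

Section AdditiveMaps.
Variables (U V : zmodType) (f : U -> V).
Hypothesis fD : {morph f : x y / x + y}.

Lemma morphD_morph0 : f 0 = 0.
Proof. by apply: (addrI (f 0)); rewrite -fD !addr0. Qed.

Lemma morphD_morphB : {morph f : x y / x - y}.
Proof.
move=> x y; rewrite fD; congr (_ + _).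
by apply: (addrI (f y)); rewrite -fD !subrr morphD_morph0.
Qed.
End AdditiveMaps.

Lemma comp0l (C : catData) (HC : isAdditive C) (A B D : Obj C) (f : Mor A B) :
  (0 : Mor B D) \oc f = 0.
Proof.
exact: (@morphD_morph0 _ _ (fun g : Mor B D => g \oc f)
          (fun g1 g2 => comp_addl HC g1 g2 f)).
Qed.

Lemma pullB (C : catData) (X : extData C) (HX : isExtriangulated X)
  (Z Z' A : Obj C) (c1 c2 : Mor Z' Z) (d : Ext X Z A) :
  pull X (c1 - c2) d = pull X c1 d - pull X c2 d.
Proof.
exact: (@morphD_morphB _ _ (fun c : Mor Z' Z => pull X c d)
          (fun c1 c2 => pull_addm HX c1 c2 d)).
Qed.

Section Suspension.
Variables (C : catData) (X : extData C).
Hypotheses (HC : isAdditive C) (HX : isExtriangulated X).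
Variables (Sig : Obj C -> Obj C) (delta : forall Y : Obj C, Ext X (Sig Y) Y).
Hypothesis Hdelta : forall Y : Obj C,
  realizes X (delta Y) (0 : Mor Y zobj) (0 : Mor zobj (Sig Y)).

Lemma pull_delta_eq0 (W V : Obj C) (h : Mor W (Sig V)) :
  pull X h (delta V) = 0 -> h = 0.
Proof.
move=> h_delta0.
have [P [i1 [i2 [p1 [p2 split_seq]]]]] := biprod_ex HC V W.
have push_id0 : push X (idm V) (0 : Ext X W V) = pull X h (delta V).
  by rewrite push_id // h_delta0.
have [b [_ hp2]] :=
  real_morph HX (real_zero HX split_seq) (Hdelta V) push_id0.
have [_ p2i2 _ _ _] := split_seq.
by rewrite -(comp_idr HC h) -p2i2 comp_assoc // -hp2 !comp0l.
Qed.

Lemma pull_delta_inj (W V : Obj C) (h h' : Mor W (Sig V)) :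
  pull X h (delta V) = pull X h' (delta V) -> h = h'.
Proof.
move=> eq_pull; apply: subr0_eq.
by apply: pull_delta_eq0; rewrite pullB // eq_pull subrr.
Qed.

Lemma SigF_add (SigF : forall U V : Obj C, Mor U V -> Mor (Sig U) (Sig V))
    (HSigF : forall (U V : Obj C) (f : Mor U V),
       push X f (delta U) = pull X (SigF U V f) (delta V))
    (U V : Obj C) (f1 f2 : Mor U V) :
  SigF U V (f1 + f2) = SigF U V f1 + SigF U V f2.
Proof.
by apply: pull_delta_inj; rewrite pull_addm // -!HSigF push_addm.
Qed.
End Suspension.

Theorem lemma3p9 (C : catData) (X : extData C)
  (HC : isAdditive C) (HX : isExtriangulated X)
  (Hinf : forall A : Obj C, is_inflation X (0 : Mor A zobj))
  (Hdef : forall A : Obj C, is_deflation X (0 : Mor zobj A))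
  (Sig : Obj C -> Obj C) (delta : forall Y : Obj C, Ext X (Sig Y) Y)
  (Hdelta : forall Y : Obj C,
      realizes X (delta Y) (0 : Mor Y zobj) (0 : Mor zobj (Sig Y)))
  (SigF : forall U V : Obj C, Mor U V -> Mor (Sig U) (Sig V))
  (HSigF : forall (U V : Obj C) (f : Mor U V),
      push X f (delta U) = pull X (SigF U V f) (delta V)) :
  E1_biadditive SigF.
Proof.
(* [Hinf] and [Hdef] only guarantee that [delta] exists; the proof does not need them. *)
rewrite /E1_biadditive /E1map; split=> Z Z' A A' *.
- by rewrite comp_addl // comp_addr.
- by rewrite (SigF_add HC HX Hdelta HSigF) comp_addl.
- by rewrite !comp_addr.
Qed.
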